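(* Let $(X,<)$ be a linearly ordered set. For all non-principal ultrafilters $u,v$ over $X$, $$(u\,\tilde<\,v\ \vee\ u\,\tilde>\,v)\ \wedge\ \neg(u\,\tilde<\,v\ \wedge\ u\,\tilde>\,v).$$ More precisely, if $\mathrm{supp}(u)\ne\mathrm{supp}(v)$ then $$u\,\tilde<\,v\iff v\,\tilde>\,u\iff\neg(v\,\tilde<\,u)\iff\neg(u\,\tilde>\,v)\iff\mathrm{supp}(u)<\mathrm{supp}(v),$$ and if $\mathrm{supp}(u)=\mathrm{supp}(v)$ then $$u\,\tilde<\,v\iff\neg(u\,\tilde>\,v)\iff \mathrm{supp}(u)=\mathrm{supp}(v)=I_u=I_v,$$ $$u\,\tilde>\,v\iff\neg(u\,\tilde<\,v)\iff \mathrm{supp}(u)=\mathrm{supp}(v)=J_u=J_v.$$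
   Context: $\beta X$ is the set of ultrafilters over $X$; $\tilde x=\{S\subseteq X:x\in S\}$. For a binary relation $R$ on $X$, $u\,\tilde R\,v\iff\{x\in X:\{y\in X:x\,R\,y\}\in v\}\in u$; here $R$ is $<$ or $>$. $I_u=\bigcap\{I\in u: I\text{ initial segment of }X\}$, $J_u=\bigcap\{J\in u: J\text{ final segment of }X\}$; for non-principal $u$ exactly one of $I_u\in u$, $J_u\in u$ holds. Supports: $\mathrm{supp}(\tilde x)=\{x\}$; for non-principal $u$, $\mathrm{supp}(u)$ is $I_u$ regarded as a left half-cut if $I_u\in u$, and $J_u$ regarded as a right half-cut if $J_u\in u$; supports are equal iff of the same kind and equal as sets. ''$\mathrm{supp}(u)=\mathrm{supp}(v)=I_u=I_v$'' means $u,v$ non-principal, $I_u\in u$, $I_v\in v$, $I_u=I_v$; similarly for $J$. Order on supports: $\{x\}<\{y\}$ iff $x<y$; $\{x\}<I$ iff $x\in I$, $I<\{x\}$ iff $x\notin I$; $\{x\}<J$ iff $x\notin J$, $J<\{x\}$ iff $x\in J$; $I<I'$ iff $I\subsetneq I'$; $J<J'$ iff $J\supsetneq J'$; $I<J$ iff $I\cap J=\emptyset$, $J<I$ iff $I\cap J\ne\emptyset$. *)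

From Stdlib Require Import Classical ClassicalEpsilon.

Set Implicit Arguments.

Definition strict_linear_order (X : Type) (lt : X -> X -> Prop) : Prop :=
  (forall x, ~ lt x x) /\
  (forall x y z, lt x y -> lt y z -> lt x z) /\
  (forall x y, lt x y \/ x = y \/ lt y x).

Definition setfam (X : Type) := (X -> Prop) -> Prop.

Definition ultrafilter (X : Type) (u : setfam X) : Prop :=
  u (fun _ => True) /\
  ~ u (fun _ => False) /\
  (forall A B : X -> Prop, u A -> (forall x, A x -> B x) -> u B) /\
  (forall A B : X -> Prop, u A -> u B -> u (fun x => A x /\ B x)) /\
  (forall A : X -> Prop, u A \/ u (fun x => ~ A x)).

Definition principal (X : Type) (u : setfam X) : Prop :=
  exists x : X, forall S : X -> Prop, u S <-> S x.

Definition tilde (X : Type) (R : X -> X -> Prop) (u v : setfam X) : Prop :=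
  u (fun x => v (fun y => R x y)).

Definition gtr (X : Type) (lt : X -> X -> Prop) : X -> X -> Prop :=
  fun x y => lt y x.

Definition initial_seg (X : Type) (lt : X -> X -> Prop) (I : X -> Prop) : Prop :=
  forall x y, lt y x -> I x -> I y.

Definition final_seg (X : Type) (lt : X -> X -> Prop) (J : X -> Prop) : Prop :=
  forall x y, lt x y -> J x -> J y.

Definition I_of (X : Type) (lt : X -> X -> Prop) (u : setfam X) : X -> Prop :=
  fun z => forall I, initial_seg lt I -> u I -> I z.

Definition J_of (X : Type) (lt : X -> X -> Prop) (u : setfam X) : X -> Prop :=
  fun z => forall J, final_seg lt J -> u J -> J z.

(* Supports: a point, a left half-cut (initial segment), a right half-cut (final segment). *)
Inductive supp_t (X : Type) : Type :=
| SPt : X -> supp_t X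
| SLeft : (X -> Prop) -> supp_t X
| SRight : (X -> Prop) -> supp_t X.
Arguments SPt {X}.
Arguments SLeft {X}.
Arguments SRight {X}.

Definition supp (X : Type) (lt : X -> X -> Prop) (u : setfam X) : supp_t X :=
  match excluded_middle_informative (principal u) with
  | left H => SPt (proj1_sig (constructive_indefinite_description _ H))
  | right _ =>
      if excluded_middle_informative (u (I_of lt u))
      then SLeft (I_of lt u) else SRight (J_of lt u)
  end.

Definition supp_eq (X : Type) (s t : supp_t X) : Prop :=
  match s, t return Prop with
  | SPt x, SPt y => x = y
  | SLeft L, SLeft K => forall z, L z <-> K z
  | SRight J, SRight J' => forall z, J z <-> J' z
  | _, _ => False
  end.

Definition supp_lt (X : Type) (lt : X -> X -> Prop) (s t : supp_t X) : Prop :=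
  match s, t return Prop with
  | SPt x, SPt y => lt x y
  | SPt x, SLeft L => L x
  | SLeft L, SPt x => ~ L x
  | SPt x, SRight J => ~ J x
  | SRight J, SPt x => J x
  | SLeft L, SLeft K => (forall z, L z -> K z) /\ exists z, K z /\ ~ L z
  | SRight J, SRight J' => (forall z, J' z -> J z) /\ exists z, J z /\ ~ J' z
  | SLeft L, SRight J => forall z, ~ (L z /\ J z)
  | SRight J, SLeft L => exists z, L z /\ J z
  end.

From Stdlib Require Import Classical ClassicalEpsilon.
Set Implicit Arguments.

(* Fix a strict linear order < on X and non-principal ultrafilters u, v.
   1. Since u contains no singleton, for every x it contains {y | x < y} or
      {y | y < x}; from this, I_u is exactly {x | {y | x < y} in u} and J_u is
      {x | {y | y < x} in u}, so J_u is the complement of I_u.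
   2. Hence u <~ v iff I_v in u, and u >~ v iff I_v is not in u, which already
      gives the first (trichotomy) part of the theorem.
   3. Membership of an initial segment I in u is governed by the support of u:
      if u is "left" (I_u in u) then I in u iff I_u is contained in I, and if u
      is "right" then I in u iff I is not contained in I_u.
   4. The supports of u and v are equal iff u, v are on the same side and
      I_u = I_v; when they differ, comparing the (linearly ordered) initial
      segments I_u, I_v via step 3 shows that I_v in u iff supp u < supp v
      iff I_u is not in v.  The theorem is a propositional consequence. *)

Section ClassicalSets.

Variable X : Type.

Lemma not_not_iff (P : Prop) : ~ ~ P <-> P.
Proof. split; [apply NNPP | tauto]. Qed.

Lemma compl_iff (P Q : Prop) : (~ P <-> ~ Q) <-> (P <-> Q).
Proof. destruct (classic P), (classic Q); tauto. Qed.

Lemma not_subset_iff (A B : X -> Prop) :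
  (exists z, B z /\ ~ A z) <-> ~ forall z, B z -> A z.
Proof.
  split; [firstorder |].
  intro H. apply not_all_ex_not in H as [z Hz]. apply imply_to_and in Hz. eauto.
Qed.

Lemma not_subset_iff' (A B : X -> Prop) :
  (exists z, ~ A z /\ B z) <-> ~ forall z, B z -> A z.
Proof. rewrite <- not_subset_iff. firstorder. Qed.

Lemma disjoint_compl_iff (A B : X -> Prop) :
  (forall z, ~ (A z /\ ~ B z)) <-> forall z, A z -> B z.
Proof. split; intros H z; specialize (H z); [intro; apply NNPP |]; tauto. Qed.

Lemma subset_compl_iff (A B : X -> Prop) :
  (forall z, ~ B z -> ~ A z) <-> forall z, A z -> B z.
Proof. split; intros H z; specialize (H z); [intro; apply NNPP |]; tauto. Qed.

End ClassicalSets.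

Section UltrafilterFacts.

Variables (X : Type) (u : setfam X).
Hypothesis Hu : ultrafilter u.

Lemma uf_mono {A B : X -> Prop} : u A -> (forall x, A x -> B x) -> u B.
Proof. pose proof Hu as (_ & _ & Hmono & _); exact (Hmono A B). Qed.

Lemma uf_ext (A B : X -> Prop) : (forall x, A x <-> B x) -> (u A <-> u B).
Proof. intro HAB; split; intro; eapply uf_mono; eauto; firstorder. Qed.

Lemma uf_meet {A B : X -> Prop} : u A -> u B -> exists x, A x /\ B x.
Proof.
  intros HA HB. pose proof Hu as (_ & Hempty & _ & Hand & _).
  apply NNPP; intro Hdisj. apply Hempty.
  apply (uf_mono (Hand A B HA HB)). intros x Hx; apply Hdisj; eauto.
Qed.

Lemma uf_compl (A : X -> Prop) : u (fun x => ~ A x) <-> ~ u A.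
Proof.
  split.
  - intros HnA HA. destruct (uf_meet HA HnA) as [x [? ?]]; tauto.
  - intro HnA. destruct Hu as (_ & _ & _ & _ & Hult). destruct (Hult A); tauto.
Qed.

Lemma uf_no_singleton : ~ principal u -> forall x, ~ u (fun y => y = x).
Proof.
  intros Hnp x Hx. apply Hnp. exists x. intro S; split.
  - intro HS. destruct (uf_meet HS Hx) as [y [? ->]]; assumption.
  - intro HS. eapply uf_mono; [exact Hx |]. intros y ->; assumption.
Qed.

End UltrafilterFacts.

Section CutsOfUltrafilters.

Variables (X : Type) (lt : X -> X -> Prop).
Hypothesis Hlin : strict_linear_order lt.

Lemma lt_irrefl : forall x, ~ lt x x.
Proof. destruct Hlin as (H & _); exact H. Qed.

Lemma lt_trans x y z : lt x y -> lt y z -> lt x z.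
Proof. destruct Hlin as (_ & H & _); apply H. Qed.

Lemma lt_total : forall x y, lt x y \/ x = y \/ lt y x.
Proof. destruct Hlin as (_ & _ & H); exact H. Qed.

Lemma initial_seg_compl (I : X -> Prop) :
  initial_seg lt I -> final_seg lt (fun x => ~ I x).
Proof. intros HI x y Hxy HnIx HIy. exact (HnIx (HI y x Hxy HIy)). Qed.

Lemma initial_seg_chain (I K : X -> Prop) :
  initial_seg lt I -> initial_seg lt K ->
  (forall z, I z -> K z) \/ (forall z, K z -> I z).
Proof.
  intros HI HK. apply NNPP; intro H. apply not_or_and in H as [H1 H2].
  apply not_all_ex_not in H1 as [a Ha]. apply not_all_ex_not in H2 as [b Hb].
  apply imply_to_and in Ha as [Ia Ka]. apply imply_to_and in Hb as [Kb Ib].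
  destruct (lt_total a b) as [h | [-> | h]]; eauto.
Qed.

(* I_u is itself an initial segment (an intersection of initial segments). *)
Lemma I_of_initial (u : setfam X) : initial_seg lt (I_of lt u).
Proof. intros x y Hyx Hx I HI HuI. exact (HI x y Hyx (Hx I HI HuI)). Qed.

Variable u : setfam X.
Hypotheses (Hu : ultrafilter u) (Hnp : ~ principal u).

Lemma uf_above_or_below : forall x, u (fun y => lt x y) \/ u (fun y => lt y x).
Proof.
  intro x. apply NNPP; intro H. apply not_or_and in H as [Habove Hbelow].
  apply (uf_compl Hu) in Habove. apply (uf_compl Hu) in Hbelow.
  pose proof (proj2 (uf_compl Hu _) (uf_no_singleton Hu Hnp x)) as Hneq.
  pose proof Hu as (_ & _ & _ & Hand & _).
  destruct (uf_meet Hu (Hand _ _ Habove Hbelow) Hneq) as [y [[Hna Hnb] Hne]].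
  destruct (lt_total x y) as [ | [ | ]]; subst; tauto.
Qed.

Lemma I_of_char x : I_of lt u x <-> u (fun y => lt x y).
Proof.
  split.
  - intro Hx. destruct (uf_above_or_below x) as [? | Hbelow]; [assumption |].
    exfalso. apply (@lt_irrefl x). apply (Hx (fun y => lt y x)); [| exact Hbelow].
    intros a b Hba Hax; eapply lt_trans; eauto.
  - intros Habove I HI HuI. destruct (uf_meet Hu HuI Habove) as [y [HIy Hxy]].
    exact (HI y x Hxy HIy).
Qed.

Lemma J_of_char x : J_of lt u x <-> u (fun y => lt y x).
Proof.
  split.
  - intro Hx. destruct (uf_above_or_below x) as [Habove | ?]; [| assumption].
    exfalso. apply (@lt_irrefl x). apply (Hx (fun y => lt x y)); [| exact Habove].
    intros a b Hab Hxa; eapply lt_trans; eauto.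
  - intros Hbelow J HJ HuJ. destruct (uf_meet Hu HuJ Hbelow) as [y [HJy Hyx]].
    exact (HJ y x Hyx HJy).
Qed.

Lemma J_of_compl x : J_of lt u x <-> ~ I_of lt u x.
Proof.
  rewrite I_of_char, J_of_char. split.
  - intros Hbelow Habove. destruct (uf_meet Hu Hbelow Habove) as [y [Hyx Hxy]].
    exact (@lt_irrefl x (lt_trans Hxy Hyx)).
  - intro Hnabove. destruct (uf_above_or_below x); tauto.
Qed.

Lemma uf_J_of : u (J_of lt u) <-> ~ u (I_of lt u).
Proof. rewrite <- (uf_compl Hu). apply (uf_ext Hu). exact J_of_compl. Qed.

Lemma left_uf_initial (I : X -> Prop) :
  u (I_of lt u) -> initial_seg lt I -> (u I <-> forall z, I_of lt u z -> I z).
Proof.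
  intros Hleft HI. split.
  - intros HuI z Hz. exact (Hz I HI HuI).
  - intro Hsub. exact (uf_mono Hu Hleft Hsub).
Qed.

Lemma right_uf_initial (I : X -> Prop) :
  ~ u (I_of lt u) -> initial_seg lt I -> (u I <-> ~ forall z, I z -> I_of lt u z).
Proof.
  intros Hright HI. apply uf_J_of in Hright.
  transitivity (~ u (fun x => ~ I x)).
  { rewrite <- (uf_compl Hu (fun x => ~ I x)). apply (uf_ext Hu).
    intro x; symmetry; apply not_not_iff. }
  assert (Hcompl : u (fun x => ~ I x) <-> forall z, J_of lt u z -> ~ I z).
  { split.
    - intros HuI z Hz. exact (Hz _ (initial_seg_compl HI) HuI).
    - intro Hsub. exact (uf_mono Hu Hright Hsub). }
  rewrite Hcompl. setoid_rewrite J_of_compl. rewrite subset_compl_iff. reflexivity.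
Qed.

Lemma supp_left : u (I_of lt u) -> supp lt u = SLeft (I_of lt u).
Proof.
  intro Hleft. unfold supp.
  destruct (excluded_middle_informative (principal u)); [tauto |].
  destruct (excluded_middle_informative (u (I_of lt u))); tauto.
Qed.

Lemma supp_right : ~ u (I_of lt u) -> supp lt u = SRight (J_of lt u).
Proof.
  intro Hright. unfold supp.
  destruct (excluded_middle_informative (principal u)); [tauto |].
  destruct (excluded_middle_informative (u (I_of lt u))); tauto.
Qed.

Lemma tilde_lt_iff (v : setfam X) :
  ultrafilter v -> tilde lt v u <-> v (I_of lt u).
Proof.
  intro Hv. apply (uf_ext Hv). intro x. symmetry. apply I_of_char.
Qed.

Lemma tilde_gt_iff (v : setfam X) :
  ultrafilter v -> tilde (gtr lt) v u <-> ~ v (I_of lt u).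
Proof.
  intro Hv. rewrite <- (uf_compl Hv). apply (uf_ext Hv). intro x.
  rewrite <- J_of_compl, J_of_char. reflexivity.
Qed.

End CutsOfUltrafilters.

Section ComparingSupports.

Variables (X : Type) (lt : X -> X -> Prop).
Hypothesis Hlin : strict_linear_order lt.
Variables u v : setfam X.
Hypotheses (Hu : ultrafilter u) (Hv : ultrafilter v)
  (Hnpu : ~ principal u) (Hnpv : ~ principal v).

Local Notation Iu := (I_of lt u).
Local Notation Iv := (I_of lt v).

Let chain : (forall z, Iu z -> Iv z) \/ (forall z, Iv z -> Iu z) :=
  initial_seg_chain Hlin (@I_of_initial X lt u) (@I_of_initial X lt v).

Lemma supp_eq_iff :
  supp_eq (supp lt u) (supp lt v) <->
  (u Iu <-> v Iv) /\ (forall z, Iu z <-> Iv z).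
Proof.
  destruct (classic (u Iu)) as [Lu | Ru]; destruct (classic (v Iv)) as [Lv | Rv];
    [rewrite (supp_left lt Hnpu Lu), (supp_left lt Hnpv Lv)
    | rewrite (supp_left lt Hnpu Lu), (supp_right lt Hnpv Rv)
    | rewrite (supp_right lt Hnpu Ru), (supp_left lt Hnpv Lv)
    | rewrite (supp_right lt Hnpu Ru), (supp_right lt Hnpv Rv)];
    simpl; try tauto.
  setoid_rewrite (J_of_compl Hlin Hu Hnpu). setoid_rewrite (J_of_compl Hlin Hv Hnpv).
  setoid_rewrite (compl_iff (Iu _)). tauto.
Qed.

Hypothesis Hdiff : ~ supp_eq (supp lt u) (supp lt v).

(* With distinct supports, two ultrafilters on the same side have strictly
   nested cuts, so one cut is below the other iff it is not above it. *)
Let cut_order_of_same_side :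
  (u Iu <-> v Iv) ->
  ((forall z, Iu z -> Iv z) <-> ~ forall z, Iv z -> Iu z).
Proof.
  intro Hside. assert (Hcut : ~ forall z, Iu z <-> Iv z)
    by (intro Hcut; apply Hdiff, supp_eq_iff; split; assumption).
  destruct chain as [Huv | Hvu].
  - split; [intros _ Hvu; apply Hcut; intro z; split; auto | intros _; exact Huv].
  - split; [intros Huv _; apply Hcut; intro z; split; auto | intro Hn; contradiction].
Qed.

Lemma mem_I_of_antisym : u Iv <-> ~ v Iu.
Proof.
  pose proof (@I_of_initial X lt u) as HIu. pose proof (@I_of_initial X lt v) as HIv.
  destruct (classic (u Iu)) as [Lu | Ru]; destruct (classic (v Iv)) as [Lv | Rv].
  - rewrite (left_uf_initial Hu Lu HIv), (left_uf_initial Hv Lv HIu).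
    apply cut_order_of_same_side; tauto.
  - rewrite (left_uf_initial Hu Lu HIv), (right_uf_initial Hlin Hv Hnpv Rv HIu).
    symmetry; apply not_not_iff.
  - rewrite (right_uf_initial Hlin Hu Hnpu Ru HIv), (left_uf_initial Hv Lv HIu).
    reflexivity.
  - rewrite (right_uf_initial Hlin Hu Hnpu Ru HIv), (right_uf_initial Hlin Hv Hnpv Rv HIu).
    rewrite (cut_order_of_same_side ltac:(tauto)), not_not_iff. reflexivity.
Qed.

Lemma supp_lt_iff : supp_lt lt (supp lt u) (supp lt v) <-> u Iv.
Proof.
  pose proof (@I_of_initial X lt v) as HIv.
  pose proof (J_of_compl Hlin Hu Hnpu) as HJu. pose proof (J_of_compl Hlin Hv Hnpv) as HJv.
  destruct (classic (u Iu)) as [Lu | Ru]; destruct (classic (v Iv)) as [Lv | Rv].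
  - rewrite (supp_left lt Hnpu Lu), (supp_left lt Hnpv Lv), (left_uf_initial Hu Lu HIv).
    simpl. rewrite not_subset_iff, <- (cut_order_of_same_side ltac:(tauto)). tauto.
  - rewrite (supp_left lt Hnpu Lu), (supp_right lt Hnpv Rv), (left_uf_initial Hu Lu HIv).
    simpl. setoid_rewrite HJv. apply disjoint_compl_iff.
  - rewrite (supp_right lt Hnpu Ru), (supp_left lt Hnpv Lv),
      (right_uf_initial Hlin Hu Hnpu Ru HIv).
    simpl. setoid_rewrite HJu. apply not_subset_iff.
  - rewrite (supp_right lt Hnpu Ru), (supp_right lt Hnpv Rv),
      (right_uf_initial Hlin Hu Hnpu Ru HIv).
    simpl. setoid_rewrite HJu. setoid_rewrite HJv. setoid_rewrite not_not_iff.
    rewrite subset_compl_iff, not_subset_iff', <- (cut_order_of_same_side ltac:(tauto)).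
    tauto.
Qed.

End ComparingSupports.

Unset Implicit Arguments.

Theorem corollary1 (X : Type) (lt : X -> X -> Prop)
  (Hlin : strict_linear_order lt)
  (u v : setfam X)
  (Hu : ultrafilter u) (Hv : ultrafilter v)
  (Hnpu : ~ principal u) (Hnpv : ~ principal v) :
  ((tilde lt u v \/ tilde (gtr lt) u v) /\ ~ (tilde lt u v /\ tilde (gtr lt) u v)) /\
  (~ supp_eq (supp lt u) (supp lt v) ->
     (tilde lt u v <-> tilde (gtr lt) v u) /\
     (tilde (gtr lt) v u <-> ~ tilde lt v u) /\
     (~ tilde lt v u <-> ~ tilde (gtr lt) u v) /\
     (~ tilde (gtr lt) u v <-> supp_lt lt (supp lt u) (supp lt v))) /\
  (supp_eq (supp lt u) (supp lt v) ->
     (tilde lt u v <-> ~ tilde (gtr lt) u v) /\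
     (~ tilde (gtr lt) u v <->
        (u (I_of lt u) /\ v (I_of lt v) /\ forall z, I_of lt u z <-> I_of lt v z)) /\
     (tilde (gtr lt) u v <-> ~ tilde lt u v) /\
     (~ tilde lt u v <->
        (u (J_of lt u) /\ v (J_of lt v) /\ forall z, J_of lt u z <-> J_of lt v z))).
Proof.
  rewrite (tilde_lt_iff Hlin Hv Hnpv Hu), (tilde_gt_iff Hlin Hv Hnpv Hu),
    (tilde_lt_iff Hlin Hu Hnpu Hv), (tilde_gt_iff Hlin Hu Hnpu Hv).
  split; [tauto | split].
  - intro Hdiff.
    pose proof (mem_I_of_antisym Hlin Hu Hv Hnpu Hnpv Hdiff).
    pose proof (supp_lt_iff Hlin Hu Hv Hnpu Hnpv Hdiff). tauto.
  - rewrite (supp_eq_iff Hlin Hu Hv Hnpu Hnpv), (uf_J_of Hlin Hu Hnpu),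
      (uf_J_of Hlin Hv Hnpv).
    intros [Hside Hcut].
    assert (Hmem : u (I_of lt v) <-> u (I_of lt u))
      by (apply (uf_ext Hu); intro z; symmetry; apply Hcut).
    assert (HJ : forall z, J_of lt u z <-> J_of lt v z).
    { intro z. rewrite (J_of_compl Hlin Hu Hnpu), (J_of_compl Hlin Hv Hnpv), Hcut.
      reflexivity. }
    tauto.
Qed.
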